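(* Let $X$ be a finite set of cardinality $|X|$, let $x_1,\dots,x_K\in X$, and let $a_1,\dots,a_K:X\to[0,\infty)$ be functions such that $a_i(x_i)\ge a_{\min}>0$ for every $i$. Then $$\sum_{k=1}^K\frac{1}{\sum_{i\le k}a_i(x_k)}=\tilde O\!\left(\frac{|X|}{a_{\min}}\right),$$ where $\tilde O$ hides factors polylogarithmic in $K$. *)

From HB Require Import structures.
From mathcomp Require Import all_boot all_order all_algebra.
From mathcomp Require Import reals exp.

(* Write c_k for the number of i <= k with x_i = x_k.  Since a_i >= 0 and
   a_i(x_i) >= a_min, the k-th denominator is at least c_k a_min.  Grouping
   the terms 1/c_k by the value y = x_k, the c_k run through 1, 2, ..., n_y,
   where n_y <= K is the number of occurrences of y; so the sum is at most
   (1/a_min) sum_y H(n_y) <= |X| (1 + ln K) / a_min, H being the harmonic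
   numbers. *)
From HB Require Import structures.
From mathcomp Require Import all_boot all_order all_algebra.
From mathcomp Require Import reals exp.
Import Order.TTheory GRing.Theory Num.Theory.
Local Open Scope ring_scope.

Lemma big_ord_prefix (T : Type) (idx : T) (op : T -> T -> T) (F : nat -> T)
    (K : nat) (k : 'I_K) :
  \big[op/idx]_(i < K | (i <= k)%N) F i = \big[op/idx]_(i < k.+1) F i.
Proof.
rewrite -(big_mkord (fun i => (i <= k)%N)) -(big_mkord xpredT).
by rewrite [RHS](@big_nat_widen _ _ _ 0 k.+1 K).
Qed.

Lemma ler_mul_count_sum (R : numDomainType) (I : finType) (P Q : pred I)
    (F : I -> R) (c : R) :
  (forall i, P i -> 0 <= F i) -> (forall i, P i -> Q i -> c <= F i) ->
  (\sum_(i | P i) Q i)%N%:R * c <= \sum_(i | P i) F i.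
Proof.
move=> F_ge0 F_ge_c; rewrite natr_sum mulr_suml; apply: ler_sum => i Pi.
by case: (boolP (Q i)) => Qi; rewrite ?mul1r ?mul0r ?F_ge_c ?F_ge0.
Qed.

Section Harmonic.
Variable R : realType.

Definition harmonic (n : nat) : R := \sum_(i < n) (i.+1%:R)^-1.

Lemma harmonicS n : harmonic n.+1 = harmonic n + (n.+1%:R)^-1.
Proof. by rewrite /harmonic big_ord_recr. Qed.

Lemma le_harmonic : {homo harmonic : m n / (m <= n)%N >-> m <= n}.
Proof.
move=> m n; elim: n => [|n IH]; first by rewrite leqn0 => /eqP->.
rewrite leq_eqVlt ltnS => /predU1P[->//|/IH le_mn].
by rewrite harmonicS (le_trans le_mn) // lerDl invr_ge0.
Qed.

Lemma ler_1Bdiv_lnB (x y : R) : 0 < x -> 0 < y -> 1 - x / y <= ln y - ln x.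
Proof.
move=> x_gt0 y_gt0.
have := @le_ln1Dx R (x / y - 1); rewrite subrKC ln_div ?posrE //.
rewrite ltrBrDl addrN divr_gt0 // => /(_ isT).
by rewrite -lerN2 !opprB.
Qed.

Lemma harmonic_le_1Dln n : harmonic n <= 1 + ln n%:R.
Proof.
elim: n => [|[|n] IH]; first by rewrite /harmonic big_ord0 ln0 // addr0.
  by rewrite harmonicS /harmonic big_ord0 ln1 invr1 add0r addr0.
rewrite harmonicS -(subrKC (ln n.+1%:R) (ln n.+2%:R)) addrA lerD //.
have -> : (n.+2%:R : R)^-1 = 1 - n.+1%:R / n.+2%:R.
  have n2_neq0 : (n.+2%:R : R) != 0 by rewrite pnatr_eq0.
  have -> : 1 - n.+1%:R / n.+2%:R = (n.+2%:R - n.+1%:R) / (n.+2%:R : R).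
    by rewrite mulrBl divff.
  by rewrite -natrB // subSnn div1r.
by rewrite ler_1Bdiv_lnB ?ltr0n.
Qed.

End Harmonic.

Section Occurrences.
Context {X : finType} (f : nat -> X).

Definition occurrences (n : nat) (y : X) : nat := (\sum_(i < n) (f i == y))%N.

Lemma occurrencesS n y : occurrences n.+1 y = (occurrences n y + (f n == y))%N.
Proof. by rewrite /occurrences big_ord_recr. Qed.

Lemma occurrences_le n y : (occurrences n y <= n)%N.
Proof.
rewrite -[X in (_ <= X)%N]card_ord -sum1_card.
by apply: leq_sum => i _; exact: leq_b1.
Qed.

Lemma sum_inv_occurrences (R : realType) n :
  \sum_(k < n) ((occurrences k.+1 (f k))%:R : R)^-1
  = \sum_(y : X) harmonic R (occurrences n y).
Proof.
elim: n => [|n IH].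
  rewrite big_ord0 big1 // => y _.
  by rewrite /occurrences big_ord0 /harmonic big_ord0.
rewrite big_ord_recr /= IH [RHS](bigD1 (f n)) //= [in LHS](bigD1 (f n)) //=.
rewrite !occurrencesS eqxx addn1 harmonicS -addrA [X in _ + X]addrC addrA.
congr (_ + _); apply: eq_bigr => y y_neq.
by rewrite occurrencesS eq_sym (negbTE y_neq) addn0.
Qed.

Lemma sum_harmonic_occurrences_le (R : realType) n :
  \sum_(y : X) harmonic R (occurrences n y) <= #|X|%:R * (1 + ln n%:R).
Proof.
rewrite mulr_natl -sumr_const; apply: ler_sum => y _.
apply: le_trans (harmonic_le_1Dln R n); exact: le_harmonic (occurrences_le n y).
Qed.

End Occurrences.

Theorem lemma18 (R : realType) :
  exists (C : R) (p : nat), 0 < C /\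
  forall (X : finType) (K : nat) (x : 'I_K -> X) (a : 'I_K -> X -> R)
         (amin : R),
    0 < amin ->
    (forall i y, 0 <= a i y) ->
    (forall i, amin <= a i (x i)) ->
    \sum_(k < K) (\sum_(i < K | (i <= k)%N) a i (x k))^-1
      <= C * (#|X|%:R / amin) * (1 + ln (K%:R : R)) ^+ p.
Proof.
exists 1, 1%N; split=> // X [|K] x a amin amin_gt0 a_ge0 amin_le.
  by rewrite big_ord0 mul1r expr1 ln0 // addr0 mulr1 divr_ge0 ?ler0n ?ltW.
pose f n := x (inord n).
have fE (i : 'I_K.+1) : f i = x i by rewrite /f inord_val.
rewrite mul1r expr1 mulrAC mulrC.
have aminV_ge0 : 0 <= amin^-1 by rewrite invr_ge0 ltW.
apply: le_trans (ler_wpM2l aminV_ge0 (sum_harmonic_occurrences_le f R K.+1)).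
rewrite -sum_inv_occurrences mulr_sumr; apply: ler_sum => k _.
have occ_le : (occurrences f k.+1 (f k))%:R * amin
               <= \sum_(i < K.+1 | (i <= k)%N) a i (x k).
  rewrite /occurrences fE.
  rewrite -(big_ord_prefix _ _ _ (fun i => nat_of_bool (f i == x k))).
  apply: ler_mul_count_sum => [i _|i _]; first exact: a_ge0.
  by rewrite fE => /eqP <-.
have occ_amin_gt0 : 0 < (occurrences f k.+1 (f k))%:R * amin.
  by rewrite mulr_gt0 // ltr0n occurrencesS eqxx addn1.
by rewrite -invfM [amin * _]mulrC lef_pV2 ?posrE // (lt_le_trans occ_amin_gt0).
Qed.
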